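(* Let $k\ge 2$ be an integer and let $F$ be a $(k,2,k)$-pattern with $W^k(F)=W^{k-1}(F)=\cdots=W^{k-g(k)}(F)=0$. Then $F$ is homogeneous.
   Context: A $(k,2,k)$-pattern is a $k$-uniform hypergraph $F$ with a partition $V(F)=V_1\cup V_2$, $|V_1|=|V_2|=k$, such that whether $S\in\binom{V(F)}{k}$ is an edge depends only on $(|S\cap V_1|,|S\cap V_2|)$; $F$ is homogeneous if it is empty or complete. For a finite set $V$ with $|V|\ge 2k\ge 2r$ and $f\colon\binom{V}{k}\to\mathbb{R}$, \[ W^r(f)=\left(\mathbb{E}_{(a_1,b_1,\ldots,a_r,b_r)}\Big(\mathbb{E}_{R}\,(-1)^{|R\cap\{b_1,\ldots,b_r\}|}f(R)\Big)^2\right)^{1/2}, \] where $(a_1,b_1,\ldots,a_r,b_r)$ is a uniformly random sequence of $2r$ distinct elements of $V$, and $R$ is a uniformly random $k$-subset of $V$ with $|R\cap\{a_i,b_i\}|=1$ for each $i\in[r]$; $W^r(F)=W^r(\mathbf{1}_F)$ with $\mathbf{1}_F$ the edge indicator. $g(k)$ is the smallest integer $g\ge 0$ such that for each integer $m\in[2,k]$, the system $\sum_{0\le i\le r}(-1)^i\binom{r}{i}\alpha_i=0$ for $r=m-g,\ldots,m$, with $\vec\alpha=(\alpha_0,\ldots,\alpha_m)\in\{0,1\}^{m+1}$, has only the solutions $(0,\ldots,0)$ and $(1,\ldots,1)$. *)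

From mathcomp Require Import all_boot all_order all_algebra.
Set Implicit Arguments. Unset Strict Implicit. Unset Printing Implicit Defensive.
Import Order.TTheory GRing.Theory Num.Theory.
Local Open Scope ring_scope.

Definition eq_r (m r : nat) (alpha : {ffun 'I_m.+1 -> bool}) : bool :=
  (\sum_(i < r.+1) ((-1) ^+ i * ('C(r, i))%:Z * (alpha (inord i) : nat)%:Z) == 0 :> int).

Definition const_vec (m : nat) (alpha : {ffun 'I_m.+1 -> bool}) : bool :=
  [forall i, alpha i == false] || [forall i, alpha i == true].

(* Property defining g(k): for each m in [2,k], the system for r = m-g,...,m
   has only the constant solutions.  (For r < 0 the equation is an empty sum,
   hence trivial, so ranging over natural r with m - g <= r <= m, truncated
   subtraction, is the same system.) *)
Definition gprop (k g : nat) : bool :=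
  [forall m : 'I_k.+1, (2 <= m)%N ==>
     [forall alpha : {ffun 'I_m.+1 -> bool},
        [forall r : 'I_m.+1, ((m - g)%N <= r)%N ==> eq_r r alpha] ==> const_vec alpha]].

(* g(k) = the smallest g >= 0 with gprop k g.  gprop k k holds (the system then
   contains r = 0,...,m, which forces alpha = 0), so the least such g lies in
   [0, k] and is found by a search over 0..k. *)
Definition gk (k : nat) : nat := find (gprop k) (iota 0 k.+1).

Section W.
Variables (R : rcfType) (V : finType).

(* a sequence (a_1,b_1,...,a_r,b_r) is encoded as t : 'I_r -> V * V,
   t i = (a_{i+1}, b_{i+1}); it must consist of 2r distinct elements *)
Definition seq_of (r : nat) (t : {ffun 'I_r -> V * V}) : seq V :=
  flatten [seq [:: (t i).1; (t i).2] | i <- enum 'I_r].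

Definition distinct_seq (r : nat) (t : {ffun 'I_r -> V * V}) : bool :=
  uniq (seq_of t).

Definition goodR (k r : nat) (t : {ffun 'I_r -> V * V}) (S : {set V}) : bool :=
  (#|S| == k) && [forall i, #|S :&: [set (t i).1; (t i).2]| == 1%N].

Definition Bset (r : nat) (t : {ffun 'I_r -> V * V}) : {set V} :=
  [set (t i).2 | i : 'I_r].

Definition innerE (k r : nat) (f : {set V} -> R) (t : {ffun 'I_r -> V * V}) : R :=
  (\sum_(S : {set V} | goodR k t S) (-1) ^+ #|S :&: Bset t| * f S)
    / (#|[set S : {set V} | goodR k t S]|)%:R.

Definition W (k r : nat) (f : {set V} -> R) : R :=
  Num.sqrt ((\sum_(t : {ffun 'I_r -> V * V} | distinct_seq t) (innerE k f t) ^+ 2)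
              / (#|[set t : {ffun 'I_r -> V * V} | distinct_seq t]|)%:R).

Definition indicator (F : {set {set V}}) : {set V} -> R :=
  fun S => (S \in F)%:R.
End W.

Definition is_pattern (V : finType) (k : nat) (V1 V2 : {set V}) (F : {set {set V}}) : Prop :=
  [/\ V1 :|: V2 = [set: V] /\ [disjoint V1 & V2], #|V1| = k, #|V2| = k,
      (forall S, S \in F -> #|S| = k) &
      (forall S T : {set V}, #|S| = k -> #|T| = k ->
         #|S :&: V1| = #|T :&: V1| -> #|S :&: V2| = #|T :&: V2| ->
         (S \in F) = (T \in F))].

Definition homogeneous (V : finType) (k : nat) (F : {set {set V}}) : Prop :=
  F = set0 \/ F = [set S : {set V} | #|S| == k].

(* Let h j be 1 or 0 according as F contains the k-sets meeting V1 in j points.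
   Pair r points a_i of V1 with r points b_i of V2.  Choosing a_i or b_i in each
   pair turns the signed sum in the definition of W^r into the r-th forward
   difference of h, so W^r(F) = 0 gives
     sum over (k-r)-sets S avoiding the pairs of (Delta^r h)(|S :&: V1|) = 0.
   Downwards from r = k: once Delta^(r+1) h vanishes, Delta^r h is constant on
   its range and the vanishing sum of that constant forces Delta^r h = 0.  Thus
   (Delta^r h)(0) = 0 for k - g(k) <= r <= k, which is the system defining g(k),
   so h, and with it F, is constant. *)

From mathcomp Require Import all_boot all_order all_algebra.
From mathcomp Require Import zify.
Set Implicit Arguments. Unset Strict Implicit. Unset Printing Implicit Defensive.
Import Order.TTheory GRing.Theory Num.Theory.
Local Open Scope ring_scope.

Section FiniteDifferences.
Variable R : pzRingType.

Definition fdiff (h : nat -> R) : nat -> R := fun j => h j.+1 - h j.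

Definition fdiffn (r : nat) (h : nat -> R) : nat -> R := iter r fdiff h.

Lemma fdiffnS r h j : fdiffn r.+1 h j = fdiffn r h j.+1 - fdiffn r h j.
Proof. by rewrite /fdiffn iterS. Qed.

Lemma fdiffnSr r h : fdiffn r.+1 h = fdiffn r (fdiff h).
Proof. by rewrite /fdiffn iterSr. Qed.

Lemma fdiffn_binomial r h j :
  \sum_(i < r.+1) (-1) ^+ i * 'C(r, i)%:R * h (j + i)%N = (-1) ^+ r * fdiffn r h j.
Proof.
elim: r j => [|r IH] j; first by rewrite big_ord1 addn0 !mul1r.
rewrite big_ord_recl /= bin0 addn0 expr0 !mul1r.
under eq_bigr => i _ do rewrite /bump /= binS natrD mulrDr mulrDl add1n.
rewrite big_split /= addrA.
have -> : \sum_(i < r.+1) (-1) ^+ i.+1 * 'C(r, i)%:R * h (j + i.+1)%N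
    = - ((-1) ^+ r * fdiffn r h j.+1).
  by rewrite -IH -sumrN; apply: eq_bigr => i _; rewrite exprS mulN1r !mulNr addSnnS.
have -> : h j + \sum_(i < r.+1) (-1) ^+ i.+1 * 'C(r, i.+1)%:R * h (j + i.+1)%N
    = \sum_(i < r.+2) (-1) ^+ i * 'C(r, i)%:R * h (j + i)%N.
  by rewrite [RHS]big_ord_recl bin0 expr0 !mul1r addn0.
rewrite big_ord_recr /= bin_small // mulr0 mul0r addr0 IH.
by rewrite exprS mulN1r mulNr -mulrN opprB -mulrBr.
Qed.

End FiniteDifferences.

Section VanishingDifferences.
Variable R : numDomainType.
Implicit Types (h : nat -> R) (k r : nat).

Lemma fdiffn_eq0_of_sum h k r (I : finType) (P : pred I) (x : I -> nat) (i0 : I) :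
  P i0 -> (forall i, P i -> (x i + r <= k)%N) ->
  \sum_(i | P i) fdiffn r h (x i) = 0 ->
  (forall j, (j + r.+1 <= k)%N -> fdiffn r.+1 h j = 0) ->
  forall j, (j + r <= k)%N -> fdiffn r h j = 0.
Proof.
move=> Pi0 x_le sum0 next0.
have const j : (j + r <= k)%N -> fdiffn r h j = fdiffn r h 0.
  elim: j => // j IHj le_jk; rewrite -IHj; last by lia.
  by apply/eqP; rewrite -subr_eq0 -fdiffnS next0 //; lia.
move: sum0; rewrite (eq_bigr (fun=> fdiffn r h 0)) => [|i /x_le]; last exact: const.
rewrite sumr_const => /eqP; rewrite mulrn_eq0 => /orP[/eqP P0 | /eqP c0 j /const -> //].
by move/card0_eq: P0 => /(_ i0); rewrite -topredE /= Pi0.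
Qed.

Lemma fdiffn_eq0_downward h k r0 :
  (forall r, (r0 <= r <= k)%N ->
     (forall j, (j + r.+1 <= k)%N -> fdiffn r.+1 h j = 0) ->
     forall j, (j + r <= k)%N -> fdiffn r h j = 0) ->
  forall r, (r0 <= r)%N -> forall j, (j + r <= k)%N -> fdiffn r h j = 0.
Proof.
move=> step r le_r0r; have [n] := ubnP (k - r).
elim: n r le_r0r => // n IHn r le_r0r ltn j le_jk.
apply: (step r _ _ j le_jk); first by rewrite le_r0r; lia.
by move=> j' le_j'k; apply: (IHn r.+1 _ _ j' le_j'k); lia.
Qed.

End VanishingDifferences.

Section SubsetSums.
Variable V : finType.
Implicit Types (S Y : {set V}) (a b x y : V).

Lemma cardsI2 S a b : a != b -> #|S :&: [set a; b]| = ((a \in S) + (b \in S))%N.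
Proof.
move=> ab; have -> : S :&: [set a; b] = [set x in [seq x <- [:: a; b] | x \in S]].
  by apply/setP => x; rewrite !inE mem_filter !inE.
rewrite cardsE (card_uniqP _) ?filter_uniq /= ?inE ?ab //.
by case: (a \in S); case: (b \in S).
Qed.

Lemma sum_subsets_setU1 (R : nmodType) Y (s : nat) (Q : pred {set V}) x y
    (F : {set V} -> R) :
  x \in Y -> x != y -> (forall S, Q (x |: S) = Q S) ->
  \sum_(S : {set V} | [&& S \subset Y, #|S| == s.+1, Q S, x \in S & y \notin S]) F S
  = \sum_(S : {set V} | [&& S \subset Y :\ x :\ y, #|S| == s & Q S]) F (x |: S).
Proof.
move=> xY xy Qx; rewrite (reindex_onto (fun S => x |: S) (fun S => S :\ x)) /=; last first.
  by move=> S /and5P[_ _ _ xS _]; rewrite setD1K.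
apply: eq_bigl => S; rewrite !subsetD1 Qx setU11 !inE negb_or.
have [xS | xS] := boolP (x \in S).
  by rewrite !andbF; apply/negbTE; apply: contraTN xS => /andP[_ /eqP <-]; rewrite !inE eqxx.
rewrite setU1K // eqxx subUset sub1set xY cardsU1 xS eqSS (eq_sym y) xy /= andbT.
by case: (y \in S); rewrite ?andbT ?andbF.
Qed.

End SubsetSums.

Section TransversalSums.
Variables (R : pzRingType) (V : finType) (V1 : {set V}).
Implicit Types (ps : seq (V * V)) (S Y : {set V}) (a b x : V).

Definition pair_elems ps : seq V := flatten [seq [:: p.1; p.2] | p <- ps].

Definition transversal ps S : bool :=
  all (fun p => #|S :&: [set p.1; p.2]| == 1%N) ps.

Definition crossing ps : bool := all (fun p => (p.1 \in V1) && (p.2 \notin V1)) ps.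

Definition transversal_sum Y (s : nat) ps (h : nat -> R) : R :=
  \sum_(S : {set V} | [&& S \subset Y, #|S| == s & transversal ps S])
    (-1) ^+ #|S :&: [set x in unzip2 ps]| * h #|S :&: V1|.

Lemma perm_pair_elems ps : perm_eq (pair_elems ps) (unzip1 ps ++ unzip2 ps).
Proof.
elim: ps => //= -[a b] ps IH /=; rewrite perm_cons.
by rewrite perm_sym -(perm_catCA [:: b]) /= perm_cons perm_sym.
Qed.

Lemma transversal_setU1 ps S x :
  x \notin pair_elems ps -> transversal ps (x |: S) = transversal ps S.
Proof.
elim: ps => //= -[a b] ps IH; rewrite !inE negb_or => /andP[/= xa /norP[/= xb /IH ->]].
congr ((_ == _) && _); apply: eq_card => y; rewrite !inE.
by case: (y =P x) => [->|] /=; rewrite ?(negbTE xa) ?(negbTE xb) ?andbF.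
Qed.

Lemma transversal_sum_cons Y s a b ps h :
  a \in V1 -> b \notin V1 -> a \in Y -> b \in Y ->
  a \notin pair_elems ps -> b \notin pair_elems ps ->
  transversal_sum Y s.+1 ((a, b) :: ps) h = transversal_sum (Y :\ a :\ b) s ps (fdiff h).
Proof.
move=> aV1 bV1 aY bY aps bps.
have ab : a != b by apply: contraNneq bV1 => <-.
have [aB bB] : a \notin unzip2 ps /\ b \notin unzip2 ps.
  move: aps bps; rewrite !(perm_mem (perm_pair_elems ps)) !mem_cat !negb_or.
  by move=> /andP[_ ->] /andP[_ ->].
rewrite /transversal_sum (bigID (fun S => a \in S)) /=.
under [RHS]eq_bigr do rewrite /fdiff mulrBr.
rewrite sumrB -sumrN; congr (_ + _).
- rewrite (eq_bigl (fun S =>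
    [&& S \subset Y, #|S| == s.+1, transversal ps S, a \in S & b \notin S])); last first.
    by move=> S; rewrite cardsI2 //; case: (a \in S); case: (b \in S); rewrite ?andbF ?andbT.
  rewrite sum_subsets_setU1 //; last by move=> S; apply: transversal_setU1.
  apply: eq_bigr => S /and3P[]; rewrite !subsetD1 => /andP[/andP[_ aS] bS] _ _.
  congr (_ ^+ _ * h _).
  + apply: eq_card => x; rewrite !inE.
    have [->|_] := x =P a; first by rewrite (negbTE ab) (negbTE aB) (negbTE aS).
    by have [->|_] := x =P b; rewrite ?(negbTE bS) ?andbF.
  + rewrite (_ : (a |: S) :&: V1 = a |: (S :&: V1)) ?cardsU1 ?inE ?(negbTE aS) //.
    by apply/setP => x; rewrite !inE; case: (x =P a) => [->|].
- rewrite (eq_bigl (fun S =>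
    [&& S \subset Y, #|S| == s.+1, transversal ps S, b \in S & a \notin S])); last first.
    by move=> S; rewrite cardsI2 //; case: (a \in S); case: (b \in S); rewrite ?andbF ?andbT.
  rewrite sum_subsets_setU1 1?eq_sym //; last by move=> S; apply: transversal_setU1.
  rewrite (_ : Y :\ b :\ a = Y :\ a :\ b); last by rewrite !setDDl setUC.
  apply: eq_bigr => S /and3P[]; rewrite !subsetD1 => /andP[/andP[_ aS] bS] _ _.
  rewrite -mulNr; congr (_ * h _).
  + rewrite (_ : (b |: S) :&: _ = b |: (S :&: [set x in unzip2 ps])); last first.
      by apply/setP => x; rewrite !inE; case: (x =P b).
    by rewrite cardsU1 inE (negbTE bS) exprS mulN1r.
  + apply: eq_card => x; rewrite !inE; case: (x =P b) => [->|_] //=.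
    by rewrite (negbTE bV1) (negbTE bS).
Qed.

Lemma transversal_sum_fdiffn Y s ps h :
  uniq (pair_elems ps) -> crossing ps -> {subset pair_elems ps <= Y} ->
  (size ps <= s)%N ->
  transversal_sum Y s ps h
  = \sum_(S : {set V} | (S \subset Y :\: [set x in pair_elems ps])
                         && (#|S| == s - size ps)%N)
      fdiffn (size ps) h #|S :&: V1|.
Proof.
elim: ps Y s h => [|[a b] ps IH] Y s h.
  move=> _ _ _ _; rewrite /transversal_sum /= subn0.
  have -> : [set x in [::] : seq V] = set0 by apply/setP => x; rewrite !inE.
  by apply: eq_big => [S|S _]; rewrite ?andbT ?setD0 // setI0 cards0 mul1r.
rewrite /= !inE negb_or => /and3P[/andP[ab aps] bps uniq_ps].
move=> /andP[/andP[aV1 bV1] cross_ps] sub_ps; case: s => // s; rewrite ltnS => le_ps_s.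
have aY : a \in Y by apply: sub_ps; rewrite !inE eqxx.
have bY : b \in Y by apply: sub_ps; rewrite !inE eqxx orbT.
rewrite transversal_sum_cons // IH //; last first.
  move=> x x_ps; rewrite !inE sub_ps ?inE ?x_ps ?orbT // andbT.
  by apply/andP; split; [apply: contraNneq bps | apply: contraNneq aps] => <-.
rewrite subSS -[fdiff (fdiffn _ h)]/(fdiffn (size ps).+1 h) fdiffnSr.
apply: eq_bigl => S; congr (_ && _).
by rewrite !setDDl; congr (_ \subset Y :\: _); apply/setP => x; rewrite !inE orbA.
Qed.

End TransversalSums.

Section Encodings.
Variable V : finType.
Implicit Types (k r : nat) (S : {set V}).

Lemma seq_of_pair_elems r (t : {ffun 'I_r -> V * V}) :
  seq_of t = pair_elems [seq t i | i <- enum 'I_r].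
Proof. by rewrite /seq_of /pair_elems -map_comp. Qed.

Lemma Bset_unzip2 r (t : {ffun 'I_r -> V * V}) :
  Bset t = [set x in unzip2 [seq t i | i <- enum 'I_r]].
Proof.
apply/setP => x; rewrite inE /unzip2 -map_comp.
by apply/imsetP/mapP => -[i _ ->]; exists i; rewrite ?mem_enum.
Qed.

Lemma goodR_transversal k r (t : {ffun 'I_r -> V * V}) S :
  goodR k t S = [&& S \subset setT, #|S| == k & transversal [seq t i | i <- enum 'I_r] S].
Proof.
rewrite subsetT /goodR /transversal all_map; congr (_ && _).
by apply/forallP/allP => [tS i _ | tS i]; apply: tS; rewrite ?mem_enum.
Qed.

Lemma W_eq0_sum (R : rcfType) k r (f : {set V} -> R) (t : {ffun 'I_r -> V * V}) :
  distinct_seq t -> W k r f = 0 ->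
  \sum_(S : {set V} | goodR k t S) (-1) ^+ #|S :&: Bset t| * f S = 0.
Proof.
move=> dt; rewrite /W => /eqP; rewrite sqrtr_eq0 ler_pdivrMr ?mul0r; last first.
  by rewrite ltr0n; apply/card_gt0P; exists t; rewrite inE.
move=> sum_le0.
have sum0 : \sum_(t' : {ffun 'I_r -> V * V} | distinct_seq t') innerE k f t' ^+ 2 = 0.
  by apply/eqP; rewrite eq_le sum_le0 sumr_ge0 // => t' _; apply: sqr_ge0.
move/eqP: (psumr_eq0P (fun t' _ => sqr_ge0 (innerE k f t')) sum0 dt).
rewrite sqrf_eq0 /innerE mulf_eq0 invr_eq0 pnatr_eq0 cards_eq0 => /orP[/eqP // | /eqP noR].
by rewrite big_pred0 // => S; move/setP: noR => /(_ S); rewrite !inE.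
Qed.

End Encodings.

Lemma eq_r_fdiffn (R : numDomainType) m r (alpha : {ffun 'I_m.+1 -> bool}) (h : nat -> R) :
  (r <= m)%N -> (forall j, (j <= m)%N -> h j = (alpha (inord j) : nat)%:R) ->
  eq_r r alpha = (fdiffn r h 0 == 0).
Proof.
move=> le_rm hE; rewrite /eq_r -(intr_eq0 R) rmorph_sum /=.
have -> : (fdiffn r h 0 == 0) = ((-1) ^+ r * fdiffn r h 0 == 0).
  by rewrite mulf_eq0 signr_eq0.
rewrite -fdiffn_binomial; congr (_ == 0); apply: eq_bigr => i _.
rewrite !intrM rmorph_sign add0n -!pmulrn hE //.
by apply: leq_trans le_rm; rewrite -ltnS.
Qed.

Lemma gprop_gk k : (gk k <= k)%N -> gprop k (gk k).
Proof.
move=> le_gk; have has_g : has (gprop k) (iota 0 k.+1) by rewrite has_find size_iota.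
by have := nth_find 0 has_g; rewrite nth_iota ?size_iota.
Qed.

Lemma gpropP k g (alpha : {ffun 'I_k.+1 -> bool}) :
  (2 <= k)%N -> gprop k g ->
  (forall r, (k - g <= r <= k)%N -> eq_r r alpha) -> const_vec alpha.
Proof.
move=> le2k /forallP /(_ ord_max) /implyP /(_ le2k) /forallP /(_ alpha) /implyP gP eqs.
by apply: gP; apply/forallP => r; apply/implyP => le_r; apply: eqs; rewrite le_r -ltnS ltn_ord.
Qed.

Section Pattern.
Variables (R : rcfType) (V : finType) (k : nat) (V1 V2 : {set V}) (F : {set {set V}}).
Hypothesis patF : is_pattern k V1 V2 F.

Definition profile (j : nat) : bool :=
  [exists S : {set V}, [&& #|S| == k, #|S :&: V1| == j & S \in F]].

Lemma pattern_complement : V2 = ~: V1.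
Proof.
case: patF => -[/setP V12 dis12] _ _ _ _; apply/setP => x; move: (V12 x); rewrite !inE.
by case: (boolP (x \in V1)) => [/(disjointFr dis12) -> | _ /= ->].
Qed.

Lemma card_pattern_space : #|V| = (k + k)%N.
Proof. by case: patF => _ c1 c2 _ _; rewrite -(cardsC V1) -pattern_complement c1 c2. Qed.

Lemma card_level_le (S : {set V}) : #|S| = k -> (#|S :&: V1| <= k)%N.
Proof. by move=> <-; apply/subset_leq_card/subsetIl. Qed.

Lemma mem_pattern (S : {set V}) : #|S| = k -> (S \in F) = profile #|S :&: V1|.
Proof.
case: patF => _ _ _ _ F_level Sk.
apply/idP/existsP => [SF | [T /and3P[/eqP Tk /eqP TS TF]]].
  by exists S; rewrite Sk SF !eqxx.
have cardV2 U : #|U :&: V2| = (#|U| - #|U :&: V1|)%N.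
  by rewrite pattern_complement -setDE -(cardsID V1 U) addKn.
by rewrite (F_level S T) // !cardV2 Sk Tk TS.
Qed.

Lemma pattern_homogeneous (c : bool) :
  (forall j, (j <= k)%N -> profile j = c) -> homogeneous k F.
Proof.
case: patF => _ _ _ Fk _ cst.
case: c cst => cst; [right | left]; apply/setP => S; rewrite inE.
  by apply/idP/eqP => [/Fk | Sk] //; rewrite mem_pattern // cst // card_level_le.
apply/negbTE/negP => SF; have Sk := Fk S SF.
by move: SF; rewrite mem_pattern // cst // card_level_le.
Qed.

Lemma exists_crossing_pairs r : (r <= k)%N ->
  exists ps : seq (V * V), [/\ size ps = r, uniq (pair_elems ps) & crossing V1 ps].
Proof.
case: patF => _ c1 c2 _ _ le_rk; rewrite pattern_complement in c2.
set s1 := take r (enum V1); set s2 := take r (enum (~: V1)).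
have [size1 size2] : size s1 = r /\ size s2 = r by rewrite !size_takel -?cardE ?c1 ?c2.
have in1 x : x \in s1 -> x \in V1 by move/mem_take; rewrite mem_enum.
have in2 x : x \in s2 -> x \notin V1 by move/mem_take; rewrite mem_enum inE.
exists (zip s1 s2); rewrite size_zip size1 size2 minnn; split=> //.
  rewrite (perm_uniq (perm_pair_elems _)) unzip1_zip ?unzip2_zip ?size1 ?size2 //.
  rewrite cat_uniq !take_uniq ?enum_uniq //= andbT.
  by apply/hasPn => x /in2; apply: contra => /in1.
apply/allP => p p_in; apply/andP; split; [apply: in1 | apply: in2].
  by rewrite -(unzip1_zip (s := s1) (t := s2)) ?size1 ?size2 // map_f.
by rewrite -(unzip2_zip (s := s1) (t := s2)) ?size1 ?size2 // map_f.
Qed.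

Lemma pattern_transversal_sum_eq0 r ps :
  W k r (indicator R F) = 0 -> size ps = r -> uniq (pair_elems ps) ->
  transversal_sum V1 setT k ps (fun i => (profile i)%:R : R) = 0.
Proof.
move=> W0 /eqP size_ps uniq_ps.
pose t : {ffun 'I_r -> V * V} := [ffun i => tnth (Tuple size_ps) i].
have tE : [seq t i | i <- enum 'I_r] = ps.
  by under eq_map => i do rewrite ffunE; exact: (map_tnth_enum (Tuple size_ps)).
have dt : distinct_seq t by rewrite /distinct_seq seq_of_pair_elems tE.
rewrite -(W_eq0_sum dt W0) /transversal_sum Bset_unzip2 tE.
apply: eq_big => [S | S /and3P[_ /eqP Sk _]]; first by rewrite goodR_transversal tE.
by rewrite /indicator mem_pattern.
Qed.

Lemma fdiffn_profile_step r : (r <= k)%N -> W k r (indicator R F) = 0 ->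
  (forall j, (j + r.+1 <= k)%N -> fdiffn r.+1 (fun i => (profile i)%:R : R) j = 0) ->
  forall j, (j + r <= k)%N -> fdiffn r (fun i => (profile i)%:R : R) j = 0.
Proof.
move=> le_rk W0; have [ps [size_ps uniq_ps cross_ps]] := exists_crossing_pairs le_rk.
have := pattern_transversal_sum_eq0 W0 size_ps uniq_ps.
rewrite transversal_sum_fdiffn ?size_ps // => [sum0|x _]; last by rewrite inE.
set Y := setT :\: _ in sum0.
have cardY : #|Y| = (k + k - (r + r))%N.
  have := cardsC [set x in pair_elems ps]; rewrite /Y setTD card_pattern_space cardsE.
  rewrite (card_uniqP uniq_ps) (perm_size (perm_pair_elems ps)) size_cat !size_map size_ps.
  by move=> <-; rewrite addKn.
have : (0 < #|[set A : {set V} | A \subset Y & #|A| == k - r]|)%N.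
  by rewrite cards_draws bin_gt0 cardY; lia.
case/card_gt0P => S0; rewrite inE => S0_in.
apply: (fdiffn_eq0_of_sum (i0 := S0) _ _ sum0) => // S /andP[_ /eqP Sk].
by have := subset_leq_card (subsetIl S V1); lia.
Qed.

End Pattern.

Theorem lemma4p4 (R : rcfType) (k : nat) (V : finType) (V1 V2 : {set V})
    (F : {set {set V}}) :
  (2 <= k)%N ->
  is_pattern k V1 V2 F ->
  (forall r : nat, (k - gk k <= r <= k)%N -> W k r (indicator R F) = 0) ->
  homogeneous k F.
Proof.
move=> le2k patF W0; set h := fun i => (profile k V1 F i)%:R : R.
have fdiffn0 r : (k - gk k <= r)%N -> forall j, (j + r <= k)%N -> fdiffn r h j = 0.
  apply: fdiffn_eq0_downward => {}r /andP[le_gr le_rk].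
  by apply: (fdiffn_profile_step patF le_rk); apply: W0; rewrite le_gr.
have [le_gk | lt_gk] := leqP (gk k) k; last first.
  (* [find] returns [k.+1] when no [g <= k] satisfies [gprop k]; then all of [h] vanishes. *)
  apply: (pattern_homogeneous (c := false) patF) => j le_jk.
  have le_g0 : (k - gk k <= 0)%N by rewrite leqn0 subn_eq0 ltnW.
  have := fdiffn0 0 le_g0 j; rewrite addn0 => /(_ le_jk) /eqP.
  by rewrite /fdiffn /= pnatr_eq0 eqb0 => /negbTE.
pose alpha : {ffun 'I_k.+1 -> bool} := [ffun i : 'I_k.+1 => profile k V1 F i].
have alphaE j : (j <= k)%N -> alpha (inord j) = profile k V1 F j.
  by move=> le_jk; rewrite ffunE inordK.
have hE j : (j <= k)%N -> h j = (alpha (inord j) : nat)%:R by move=> /alphaE ->.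
have eqs r : (k - gk k <= r <= k)%N -> eq_r r alpha.
  by case/andP => le_gr le_rk; rewrite (eq_r_fdiffn le_rk hE) fdiffn0.
case/orP: (gpropP le2k (gprop_gk le_gk) eqs) => /forallP cst.
  by apply: (pattern_homogeneous (c := false) patF) => j /alphaE <-; apply/eqP.
by apply: (pattern_homogeneous (c := true) patF) => j /alphaE <-; apply/eqP.
Qed.
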